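(* Let $V$ be an infinite Gödel set. A sentence of the BS class w.r.t. validity is valid in $G_V$ if and only if it is valid in $G_n$ for every $n\ge2$; and a sentence of the BS class w.r.t. 1-satisfiability is 1-satisfiable in $G_V$ if and only if it is 1-satisfiable in $G_n$ for every $n\ge2$. In particular, $\mathrm{BS}(G_{[0,1]})=\bigcap_{n\ge2}\mathrm{BS}(G_n)$.
   Context: A Gödel set is a closed set $V\subseteq[0,1]$ with $0,1\in V$. A $V$-interpretation assigns to each $k$-ary predicate a function $U^k\to V$ on a nonempty domain $U$ (constants as usual); $\bot\mapsto0$, $\wedge,\vee$ are $\min,\max$, $\mathcal I(A\supset B)=1$ if $\mathcal I(A)\le\mathcal I(B)$ and $=\mathcal I(B)$ otherwise, $\forall,\exists$ are $\inf,\sup$ over $U$. A sentence is valid in $G_V$ if every $V$-interpretation gives it value $1$, and 1-satisfiable in $G_V$ if some $V$-interpretation gives it value $1$. $G_{[0,1]}$ is $G_V$ with $V=[0,1]$; for $n\ge2$, $G_n$ is $G_V$ with $V=\{1\}\cup\{1-1/k:1\le k\le n-1\}$. The BS class w.r.t. validity consists of sentences $\forall\bar x\exists\bar y\,\psi$, and w.r.t. 1-satisfiability of sentences $\exists\bar x\forall\bar y\,\psi$, with $\psi$ quantifier-free, tuples possibly empty, and no function symbols of positive arity. $\mathrm{BS}(G)$ denotes the set of BS sentences (w.r.t. validity) valid in $G$. *)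

From HB Require Import structures.
From mathcomp Require Import all_boot all_order all_algebra.
From mathcomp Require Import boolp classical_sets cardinality reals topology.
From mathcomp Require Import Rstruct Rstruct_topology.
Unset Printing Implicit Defensive.
Import Order.TTheory GRing.Theory Num.Theory.
Local Open Scope classical_set_scope.
Local Open Scope ring_scope.

Definition RR := Rdefinitions.R.

Inductive term := Var of nat | Cst of nat.

(* Formulas. [Atom p ts] is the (size ts)-ary predicate symbol named p applied to ts;
   predicate symbols are identified by the pair (name, arity). *)
Inductive form :=
| Bot
| Atom of nat & seq term
| And of form & form
| Or of form & form
| Imp of form & form
| All of nat & form
| Ex of nat & form.

Fixpoint tvars (ts : seq term) : seq nat :=
  match ts with
  | [::] => [::]
  | Var n :: ts' => n :: tvars ts'
  | Cst _ :: ts' => tvars ts'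
  end.

Fixpoint fv (A : form) : seq nat :=
  match A with
  | Bot => [::]
  | Atom _ ts => tvars ts
  | And A B | Or A B | Imp A B => fv A ++ fv B
  | All x A | Ex x A => seq.filter (fun y => y != x) (fv A)
  end.

Definition sentence (A : form) : Prop := fv A = [::].

Fixpoint qfree (A : form) : bool :=
  match A with
  | Bot | Atom _ _ => true
  | And A B | Or A B | Imp A B => qfree A && qfree B
  | All _ _ | Ex _ _ => false
  end.

Definition alls (xs : seq nat) (A : form) := foldr All A xs.
Definition exs (xs : seq nat) (A : form) := foldr Ex A xs.

Definition BS_valid (A : form) : Prop :=
  sentence A /\ exists xs ys psi, qfree psi /\ A = alls xs (exs ys psi).

Definition BS_sat (A : form) : Prop :=
  sentence A /\ exists xs ys psi, qfree psi /\ A = exs xs (alls ys psi).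

Definition goedel_set (V : set RR) : Prop :=
  closed V /\ V `<=` [set x | 0 <= x <= 1] /\ V 0 /\ V 1.

Definition V01 : set RR := [set x | 0 <= x <= 1].

Definition Vn (n : nat) : set RR :=
  [set x | x = 1 \/ exists k : nat, (1 <= k <= n.-1)%N /\ x = 1 - k%:R^-1].

Record interp (V : set RR) := Interp {
  dom : Type;
  dom_pt : dom;
  icst : nat -> dom;
  ipred : nat -> seq dom -> RR;
  ipred_V : forall p us, V (ipred p us)
}.
Arguments dom {V} i.
Arguments dom_pt {V} i.
Arguments icst {V} i _.
Arguments ipred {V} i _ _.
Arguments ipred_V {V} i _ _.

Definition upd {U : Type} (e : nat -> U) (x : nat) (u : U) : nat -> U :=
  fun y => if y == x then u else e y.

Definition tval {V : set RR} (I : interp V) (e : nat -> dom I) (t : term) : dom I :=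
  match t with Var n => e n | Cst c => icst I c end.

Definition gimp (a b : RR) : RR := if a <= b then 1 else b.

Fixpoint eval {V : set RR} (I : interp V) (e : nat -> dom I) (A : form) : RR :=
  match A with
  | Bot => 0
  | Atom p ts => ipred I p (map (tval I e) ts)
  | And A B => Num.min (eval I e A) (eval I e B)
  | Or A B => Num.max (eval I e A) (eval I e B)
  | Imp A B => gimp (eval I e A) (eval I e B)
  | All x A => inf [set eval I (upd e x u) A | u in [set: dom I]]
  | Ex x A => sup [set eval I (upd e x u) A | u in [set: dom I]]
  end.

(* Value of a sentence (independent of the environment for sentences). *)
Definition value {V : set RR} (I : interp V) (A : form) : RR := eval I (fun _ => dom_pt I) A.

Definition valid (V : set RR) (A : form) : Prop := forall I : interp V, value I A = 1.
Definition sat1 (V : set RR) (A : form) : Prop := exists I : interp V, value I A = 1.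

(* Goedel connectives only compare truth values, so any map h with h 0 = 0 and
   h 1 = 1 that is monotone, and strictly monotone except where it reaches 1,
   commutes with them; relabelling the atomic values of an interpretation by such
   an h (and pulling the domain back along any map) relabels the values of every
   quantifier-free formula.
   A G_n-countermodel of [forall xs, exists ys, psi] has its atomic values in the
   finite chain V_n, which embeds order-preservingly into any infinite Goedel set
   V; the values of psi stay below 1 - 1/(n-1) < 1, so the relabelled
   interpretation refutes the sentence in G_V. Conversely, a G_V-countermodel can
   be cut down to the finite subdomain of the witnesses for xs and the constants
   of psi; it has finitely many atomic values, which embed into V_n for n large,
   and over a finite domain the values of psi below 1 stay below a common bound.
   For 1-satisfiability, sending every positive value to 1 is such a map, into
   {0, 1} which is contained in every V_n; conversely V_2 = {0, 1} is contained
   in V. *)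

From Pilot Require Import Defs.
From mathcomp Require Import all_boot all_order all_algebra.
From mathcomp Require Import boolp classical_sets cardinality reals topology.
From mathcomp Require Import Rstruct Rstruct_topology finmap.
Import Order.TTheory GRing.Theory Num.Theory.
Local Open Scope classical_set_scope.
Local Open Scope ring_scope.

Local Notation eval := Defs.eval.
Local Notation form := Defs.form.

Definition agree_off {T : Type} (xs : seq nat) (e e' : nat -> T) :=
  forall v, v \notin xs -> e' v = e v.

Lemma agree_off_behead {T : Type} {x xs} {e e' : nat -> T} :
  agree_off (x :: xs) e e' -> agree_off xs (upd e x (e' x)) e'.
Proof.
move=> ee' v vxs; rewrite /upd; case: eqP => [->//|/eqP vx].
by apply: ee'; rewrite in_cons negb_or vx.
Qed.

Lemma agree_off_cons {T : Type} {x xs} {e e' : nat -> T} {u} :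
  agree_off xs (upd e x u) e' -> agree_off (x :: xs) e e'.
Proof.
move=> ee' v; rewrite in_cons negb_or => /andP[vx vxs].
by rewrite ee' // /upd (negbTE vx).
Qed.

Section Quantifiers.
Context {V : set RR} {I : interp V} (V_01 : V `<=` V01).

Let variants e x A := [set eval I (upd e x u) A | u in [set: dom I]].

Let variants_neq0 e x A : variants e x A !=set0.
Proof. by exists (eval I (upd e x (dom_pt I)) A), (dom_pt I). Qed.

Lemma eval_01 e A : 0 <= eval I e A <= 1.
Proof.
elim: A e => [|p ts|A IHA B IHB|A IHA B IHB|A IHA B IHB|x A IHA|x A IHA] e /=.
- by rewrite lexx ler01.
- exact: V_01 (ipred_V I p _).
- by rewrite le_min ge_min; case/andP: (IHA e) => -> ->; case/andP: (IHB e) => ->.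
- by rewrite le_max ge_max; case/andP: (IHA e) => -> ->; case/andP: (IHB e) => _ ->.
- by rewrite /gimp; case: ifP => _; rewrite ?ler01 ?lexx ?IHB.
- have [A0 A1] : (forall u, 0 <= eval I (upd e x u) A) /\ (forall u, eval I (upd e x u) A <= 1).
    by split=> u; case/andP: (IHA (upd e x u)).
  apply/andP; split; first by apply: lb_le_inf (variants_neq0 _ _ _) _ => _ [u _ <-].
  apply: le_trans (A1 (dom_pt I)); apply: ge_inf; last by exists (dom_pt I).
  by exists 0 => _ [u _ <-].
- have [A0 A1] : (forall u, 0 <= eval I (upd e x u) A) /\ (forall u, eval I (upd e x u) A <= 1).
    by split=> u; case/andP: (IHA (upd e x u)).
  apply/andP; split; last by apply: ge_sup (variants_neq0 _ _ _) _ => _ [u _ <-].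
  apply: le_trans (A0 (dom_pt I)) _; apply: ub_le_sup; last by exists (dom_pt I).
  by exists 1 => _ [u _ <-].
Qed.

Let variants_lbound e x A : has_lbound (variants e x A).
Proof. by exists 0 => _ [u _ <-]; case/andP: (eval_01 (upd e x u) A). Qed.

Let variants_ubound e x A : has_ubound (variants e x A).
Proof. by exists 1 => _ [u _ <-]; case/andP: (eval_01 (upd e x u) A). Qed.

Lemma eval_alls_le {xs e e'} B : agree_off xs e e' -> eval I e (alls xs B) <= eval I e' B.
Proof.
move=> ee'; elim: xs e ee' => [|x xs IH] e ee' /=.
  by rewrite (_ : e' = e) // funeqE => v; exact: ee'.
apply: le_trans _ (IH _ (agree_off_behead ee')).
by apply: ge_inf (variants_lbound _ _ _) _ _; exists (e' x).
Qed.

Lemma eval_exs_ge {xs e e'} B : agree_off xs e e' -> eval I e' B <= eval I e (exs xs B).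
Proof.
move=> ee'; elim: xs e ee' => [|x xs IH] e ee' /=.
  by rewrite (_ : e' = e) // funeqE => v; exact: ee'.
apply: le_trans (IH _ (agree_off_behead ee')) _.
by apply: ub_le_sup (variants_ubound _ _ _) _ _; exists (e' x).
Qed.

Lemma eval_alls_lt xs e B c : eval I e (alls xs B) < c ->
  exists2 e', agree_off xs e e' & eval I e' B < c.
Proof.
elim: xs e => [|x xs IH] e /=; first by exists e.
move=> /(inf_lt (variants_neq0 _ _ _))[_ [u _ <-]] /IH[e' ee' e'B].
by exists e'; first exact: agree_off_cons ee'.
Qed.

Lemma eval_exs_gt xs e B c : c < eval I e (exs xs B) ->
  exists2 e', agree_off xs e e' & c < eval I e' B.
Proof.
elim: xs e => [|x xs IH] e /=; first by exists e.
move=> /(sup_gt (variants_neq0 _ _ _))[_ [u _ <-]] /IH[e' ee' e'B].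
by exists e'; first exact: agree_off_cons ee'.
Qed.

Lemma eval_alls_ge {xs e B c} : (forall e', agree_off xs e e' -> c <= eval I e' B) ->
  c <= eval I e (alls xs B).
Proof.
move=> cB; elim: xs e cB => [|x xs IH] e /= cB; first by apply: cB.
apply: lb_le_inf (variants_neq0 _ _ _) _ => _ [u _ <-]; apply: IH => e' ee'.
exact/cB/agree_off_cons/ee'.
Qed.

Lemma eval_exs_le {xs e B c} : (forall e', agree_off xs e e' -> eval I e' B <= c) ->
  eval I e (exs xs B) <= c.
Proof.
move=> Bc; elim: xs e Bc => [|x xs IH] e /= Bc; first by apply: Bc.
apply: ge_sup (variants_neq0 _ _ _) _ => _ [u _ <-]; apply: IH => e' ee'.
exact/Bc/agree_off_cons/ee'.
Qed.

Lemma value_eq1 A : ~ value I A < 1 -> value I A = 1.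
Proof.
rewrite ltNge => /negP/negbNE ge1; apply/le_anti; rewrite ge1 andbT.
by have /andP[] := eval_01 (fun=> dom_pt I) A.
Qed.

Lemma alls_exs_lt1_witness xs ys psi : value I (alls xs (exs ys psi)) < 1 ->
  exists2 e, agree_off xs (fun=> dom_pt I) e &
    forall e', agree_off ys e e' -> eval I e' psi < 1.
Proof.
move=> /eval_alls_lt[e pe lt1]; exists e => // e' ee'.
exact: le_lt_trans (eval_exs_ge _ ee') lt1.
Qed.

Lemma value_alls_exs_le {xs ys psi e M} : agree_off xs (fun=> dom_pt I) e ->
  (forall e', agree_off ys e e' -> eval I e' psi <= M) ->
  value I (alls xs (exs ys psi)) <= M.
Proof. by move=> pe psiM; exact: le_trans (eval_alls_le _ pe) (eval_exs_le psiM). Qed.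

Lemma exs_alls_eq1_witness xs ys psi : value I (exs xs (alls ys psi)) = 1 ->
  exists2 e, agree_off xs (fun=> dom_pt I) e &
    forall e', agree_off ys e e' -> 0 < eval I e' psi.
Proof.
move=> eq1; have /eval_exs_gt[e pe gt0] : 0 < value I (exs xs (alls ys psi)).
  by rewrite eq1 ltr01.
by exists e => // e' ee'; exact: lt_le_trans gt0 (eval_alls_le _ ee').
Qed.

Lemma value_exs_alls_eq1 {xs ys psi e} : agree_off xs (fun=> dom_pt I) e ->
  (forall e', agree_off ys e e' -> eval I e' psi = 1) ->
  value I (exs xs (alls ys psi)) = 1.
Proof.
move=> pe psi1; apply: value_eq1; apply/negP; rewrite -leNgt.
by apply: le_trans (eval_exs_ge _ pe); apply: eval_alls_ge => e' ee'; rewrite psi1.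
Qed.

End Quantifiers.

Definition goedel_hom (W : set RR) (h : RR -> RR) :=
  [/\ h 0 = 0, h 1 = 1,
      forall a b, W a -> W b -> a <= b -> h a <= h b &
      forall a b, W a -> W b -> a < b -> h a < h b \/ h a = 1].

Section GoedelHom.
Context {W : set RR} {h : RR -> RR} (hW : goedel_hom W h).

Lemma goedel_hom_min a b : W a -> W b -> h (Num.min a b) = Num.min (h a) (h b).
Proof.
case: hW => _ _ hle _ Wa Wb; case: (leP a b) => [ab|/ltW ba].
  by rewrite !min_l // hle.
by rewrite !min_r // hle.
Qed.

Lemma goedel_hom_max a b : W a -> W b -> h (Num.max a b) = Num.max (h a) (h b).
Proof.
case: hW => _ _ hle _ Wa Wb; case: (leP a b) => [ab|/ltW ba].
  by rewrite !max_r // hle.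
by rewrite !max_l // hle.
Qed.

Lemma goedel_hom_imp a b : W a -> W b -> h (gimp a b) = gimp (h a) (h b).
Proof.
case: hW => _ h1 hle hlt Wa Wb; rewrite /gimp; case: (leP a b) => [ab|ba].
  by rewrite h1 hle.
by case: (hlt b a Wb Wa ba) => [hba|->]; [rewrite leNgt hba | case: ifP].
Qed.

End GoedelHom.

Lemma strict_goedel_hom (W : set RR) (h : RR -> RR) : h 0 = 0 -> h 1 = 1 ->
  (forall a b, W a -> W b -> a < b -> h a < h b) -> goedel_hom W h.
Proof.
move=> h0 h1 hlt; split=> // [a b Wa Wb|a b Wa Wb /(hlt _ _ Wa Wb)]; last by left.
by rewrite le_eqVlt => /predU1P[->//|/(hlt _ _ Wa Wb)/ltW].
Qed.

Fixpoint symbols (A : form) : seq (nat * nat) :=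
  match A with
  | Atom p ts => [:: (p, size ts)]
  | And A B | Or A B | Imp A B => symbols A ++ symbols B
  | _ => [::]
  end.

Definition term_cst (t : term) : option nat := if t is Cst k then Some k else None.

Fixpoint csts (A : form) : seq nat :=
  match A with
  | Atom _ ts => pmap term_cst ts
  | And A B | Or A B | Imp A B => csts A ++ csts B
  | _ => [::]
  end.

Lemma eval_qfree_ext (V : set RR) (I : interp V) e e' psi : qfree psi ->
  {in fv psi, e =1 e'} -> eval I e psi = eval I e' psi.
Proof.
elim: psi => //= [p ts _ ee'|a IHa b IHb|a IHa b IHb|a IHa b IHb].
  congr (ipred I p _); elim: ts ee' => //= [[v|k] ts IH] ee' /=; last by rewrite IH.
  by rewrite ee' ?mem_head // IH // => w wts; apply: ee'; rewrite in_cons wts orbT.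
all: move=> /andP[qa qb] ee'; rewrite IHa ?IHb // => v vf; apply: ee'.
all: by rewrite mem_cat vf ?orbT.
Qed.

Section Pullback.
Context {V V' : set RR} {I : interp V} {D : Type} (d0 : D) (f : D -> dom I)
  (c : nat -> D) {h : RR -> RR} (h_V : forall x, V x -> V' (h x)).

Definition pullback : interp V' :=
  Interp V' D d0 c (fun p us => h (ipred I p (map f us)))
    (fun p us => h_V _ (ipred_V I p (map f us))).

Context {W : set RR} {syms : seq (nat * nat)} {cs : seq nat}.
Context (hW : goedel_hom W h) (W0 : W 0) (W1 : W 1).
Context (W_atoms : forall p us, (p, size us) \in syms -> W (ipred I p (map f us))).
Context (c_csts : {in cs, forall k, f (c k) = icst I k}).

Lemma eval_pullback psi e : qfree psi ->
  all [in syms] (symbols psi) -> all [in cs] (csts psi) ->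
  eval pullback e psi = h (eval I (f \o e) psi) /\ W (eval I (f \o e) psi).
Proof.
have [h0 _ _ _] := hW.
elim: psi => [|p ts|a IHa b IHb|a IHa b IHb|a IHa b IHb|//|//] /=.
- by rewrite h0.
- rewrite andbT => _ pts cts.
  have E : map f (map (Defs.tval pullback e) ts) = map (Defs.tval I (f \o e)) ts.
    elim: ts cts {pts} => //= -[v|k] ts IH /=; first by move=> /IH->.
    by case/andP=> ck /IH->; rewrite c_csts.
  by rewrite -E; split=> //; apply: W_atoms; rewrite size_map.
all: rewrite !all_cat => /andP[qa qb] /andP[sa sb] /andP[ca cb].
all: have [-> Wa] := IHa qa sa ca; have [-> Wb] := IHb qb sb cb.
- by rewrite (goedel_hom_min hW) //; split=> //; case: leP.
- by rewrite (goedel_hom_max hW) //; split=> //; case: leP.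
- by rewrite (goedel_hom_imp hW) //; split=> //; rewrite /gimp; case: ifP.
Qed.

Lemma pullback_refutes {xs ys psi M e eJ} : V' `<=` V01 -> qfree psi ->
  all [in syms] (symbols psi) -> all [in cs] (csts psi) ->
  (forall w, W w -> w < 1 -> h w <= M) ->
  agree_off xs (fun=> d0) eJ -> {in fv psi, forall v, f (eJ v) = e v} ->
  (forall e', agree_off ys e e' -> eval I e' psi < 1) ->
  value pullback (alls xs (exs ys psi)) <= M.
Proof.
move=> V'_01 qpsi spsi cpsi hM pJ fe psi1.
apply: (value_alls_exs_le (I := pullback) V'_01 pJ) => e'' ee''.
(* f sends each ys-variant e'' of eJ to the ys-variant e3 of e. *)
pose e3 v := if v \in ys then f (e'' v) else e v.
have ee3 : agree_off ys e e3 by move=> v /negbTE; rewrite /e3 => ->.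
have fe3 : eval I (f \o e'') psi = eval I e3 psi.
  apply: eval_qfree_ext qpsi _ => v vpsi; rewrite /e3 /=.
  by case: ifPn => // vys; rewrite ee'' // fe.
have [-> Wpsi] := eval_pullback _ e'' qpsi spsi cpsi.
by apply: hM Wpsi _; rewrite fe3 psi1.
Qed.

End Pullback.

Section RankEmbedding.
Context {src tgt : seq RR}.
Hypotheses (src0 : 0 \in src) (src_01 : {in src, forall v, 0 <= v < 1}).
Hypotheses (tgt_sorted : sorted <%R tgt) (tgt_head : head 0 tgt = 0)
  (tgt_lt1 : {in tgt, forall v, v < 1}) (src_tgt : (size src <= size tgt)%N).

Let rank v := count (fun w => w < v) (undup src).
Let embed v := if v < 1 then nth 0 tgt (rank v) else 1.

Let rank_lt_size v : v \in src -> (rank v < size tgt)%N.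
Proof.
move=> vs; apply: leq_trans (leq_trans (size_undup src) src_tgt).
rewrite /rank -(count_predC (fun w => w < v) (undup src)) -addn1 leq_add2l.
by rewrite -has_count; apply/hasP; exists v; rewrite ?mem_undup //= ltxx.
Qed.

Let rank_lt a b : a \in src -> a < b -> (rank a < rank b)%N.
Proof.
move=> as_ ab; rewrite /rank -!size_filter.
apply: (uniq_leq_size (s1 := a :: _)) => [|w].
  by rewrite /= filter_uniq ?undup_uniq // mem_filter ltxx.
rewrite in_cons !mem_filter => /predU1P[->|/andP[wa ->]].
  by rewrite ab mem_undup.
by rewrite (lt_trans wa ab).
Qed.

Let embed_src v : v \in src -> embed v \in tgt.
Proof.
by move=> vs; case/andP: (src_01 _ vs) => _ v1; rewrite /embed v1 mem_nth ?rank_lt_size.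
Qed.

Lemma rank_embedding : exists h, [/\ goedel_hom [set x | x \in src \/ x = 1] h,
  forall v, h v \in tgt \/ h v = 1 & {in src, forall v, h v \in tgt}].
Proof.
have tgt0 : 0 \in tgt.
  by rewrite -tgt_head; case: tgt src_tgt => [|? ?]; [case: src src0 | rewrite mem_head].
exists embed; split=> //; last first.
  move=> v; rewrite /embed; case: ifP => _; [left | by right].
  by case: (ltnP (rank v) (size tgt)) => [/mem_nth //|/(nth_default 0) ->].
apply: strict_goedel_hom => [|| a b [as_|->] [bs|->] ab].
- rewrite /embed ltr01 /rank (eq_in_count (a2 := pred0)) ?count_pred0 -?nth0 //.
  by move=> w; rewrite mem_undup => /src_01 /andP[w0 _] /=; rewrite ltNge w0.
- by rewrite /embed ltxx.
- have := embed_src _ as_; rewrite /embed.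
  case/andP: (src_01 _ as_) (src_01 _ bs) => _ -> /andP[_ ->] _.
  by rewrite (lt_sorted_ltn_nth 0 tgt_sorted) ?inE ?rank_lt_size ?rank_lt.
- by rewrite [embed 1]/embed ltxx tgt_lt1 ?embed_src.
- by case/andP: (src_01 _ bs) => _; rewrite ltNge (ltW ab).
- by rewrite ltxx in ab.
Qed.

End RankEmbedding.

Lemma lt1_upper_bound (t : seq RR) : {in t, forall v, v < 1} ->
  exists2 M, M < 1 & {in t, forall v, v <= M}.
Proof.
move=> t_lt1; exists (\big[Num.max/0]_(v <- t) v) => [|v vt]; last first.
  exact: le_bigmax_seq.
rewrite big_seq; apply: (big_ind (fun m => m < 1)) => [|x y x1 y1|v /t_lt1 //]; first exact: ltr01.
by rewrite gt_max x1.
Qed.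

Definition vn_val (k : nat) : RR := 1 - k%:R^-1.
Definition vn_seq (n : nat) : seq RR := [seq vn_val k | k <- iota 1 n.-1].

Lemma vn_val1 : vn_val 1 = 0.
Proof. by rewrite /vn_val invr1 subrr. Qed.

Lemma vn_val_01 k : (0 < k)%N -> 0 <= vn_val k < 1.
Proof.
move=> k0; rewrite /vn_val subr_ge0 invf_le1 ?ltr0n // ler1n k0 /=.
by rewrite ltrBlDr ltrDl invr_gt0 ltr0n.
Qed.

Lemma vn_seq_sorted n : sorted <%R (vn_seq n).
Proof.
apply: (homo_sorted_in (P := fun k => (0 < k)%N)); last exact: iota_ltn_sorted.
  move=> k l k0 l0 kl; rewrite /vn_val ltrD2l ltrN2 ltf_pV2 ?posrE ?ltr0n //.
  by rewrite ltr_nat.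
by apply/allP => k; rewrite mem_iota; case/andP.
Qed.

Lemma vn_seq_01 n : {in vn_seq n, forall v, 0 <= v < 1}.
Proof. by move=> v /mapP[k]; rewrite mem_iota => /andP[k0 _] ->; exact: vn_val_01. Qed.

Lemma vn_seq_head n : (2 <= n)%N -> head 0 (vn_seq n) = 0.
Proof. by case: n => [|[|n]] //= _; rewrite /vn_seq /= vn_val1. Qed.

Lemma mem0_vn_seq n : (2 <= n)%N -> 0 \in vn_seq n.
Proof. by case: n => [|[|n]] //= _; rewrite /vn_seq /= vn_val1 mem_head. Qed.

Lemma size_vn_seq n : size (vn_seq n) = n.-1.
Proof. by rewrite size_map size_iota. Qed.

Lemma VnE n x : Vn n x <-> x \in vn_seq n \/ x = 1.
Proof.
rewrite or_comm; apply: or_iff_compat_l; split=> [[k [kn ->]]|/mapP[k]].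
  by apply: map_f; rewrite mem_iota add1n ltnS.
by rewrite mem_iota add1n ltnS => kn ->; exists k.
Qed.

Lemma Vn_01 n : Vn n `<=` V01.
Proof.
move=> x /VnE[/vn_seq_01/andP[x0 /ltW x1]|->]; first by rewrite /V01 /= x0 x1.
by rewrite /V01 /= ler01 lexx.
Qed.

Lemma finite_restriction {V : set RR} {I : interp V} psi {xs} {e : nat -> dom I} :
  agree_off xs (fun=> dom_pt I) e ->
  exists (D : finType) (d0 : D) (f : D -> dom I) (c : nat -> D) (eJ : nat -> D),
    [/\ agree_off xs (fun=> d0) eJ, {in fv psi, forall v, f (eJ v) = e v}
      & {in csts psi, forall k, f (c k) = icst I k}].
Proof.
move=> pe; pose D := option (seq_sub (fv psi) + seq_sub (csts psi)).
pose f (d : D) := match d with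
  | None => dom_pt I | Some (inl v) => e (ssval v) | Some (inr k) => icst I (ssval k) end.
exists D, None, f, (fun k => omap inr (insub k)),
  (fun v => if v \in xs then omap inl (insub v) else None).
split=> [v /negbTE -> //|v vpsi|k kpsi]; last by rewrite insubT.
by case: ifPn => [_|/pe ->]; rewrite ?insubT.
Qed.

Lemma atom_values_finite {V : set RR} (I : interp V) {D : finType} (f : D -> dom I)
    (syms : seq (nat * nat)) :
  exists S : seq RR, forall p us, (p, size us) \in syms -> ipred I p (map f us) \in S.
Proof.
exists (flatten [seq [seq ipred I s.1 (map f t) | t : s.2.-tuple D] | s <- syms]).
move=> p us pus; apply/flatten_mapP; exists (p, size us) => //.
by rewrite -[us]/(tval (in_tuple us)) map_f ?mem_enum.
Qed.

Lemma infinite_interior (V : set RR) : V `<=` V01 -> infinite_set V ->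
  infinite_set (V `&` [set x | 0 < x < 1]).
Proof.
move=> V_01 /infinite_setD /(_ (finite_set2 0 1)); apply: sub_infinite_set.
move=> x [Vx /not_orP[x0 x1]]; split=> //=; have /andP[] := V_01 _ Vx.
by rewrite !le_eqVlt => /predU1P[/esym/x0[]|->] /predU1P[/x1[]|->].
Qed.

Lemma infinite_unit_interior : infinite_set (V01 `&` [set x | 0 < x < 1]).
Proof.
move=> fin; apply: infinite_nat.
have inj : injective (fun k : nat => (k.+2%:R : RR)^-1).
  by move=> k l /invr_inj /eqP; rewrite eqr_nat => /eqP [].
have := finite_preimage (in2W inj) fin; rewrite (_ : _ @^-1` _ = setT) //.
apply/seteqP; split=> // k _ /=.
have k0 : (0 : RR) < k.+2%:R^-1 by rewrite invr_gt0 ltr0n.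
have k1 : (k.+2%:R : RR)^-1 < 1 by rewrite invf_lt1 ?ltr0n // ltr1n.
by rewrite /V01 /= (ltW k0) (ltW k1) k0 k1.
Qed.

Lemma finite_chain (V : set RR) n : V 0 -> infinite_set (V `&` [set x | 0 < x < 1]) ->
  exists tgt : seq RR, [/\ sorted <%R tgt, head 0 tgt = 0, (n <= size tgt)%N
    & {in tgt, forall x, V x /\ x < 1}].
Proof.
move=> V0 /(infinite_set_fset n)[B BV nB]; exists (0 :: sort <=%R B); split=> //.
- rewrite /= path_sortedE; last exact: lt_trans.
  rewrite sort_lt_sorted fset_uniq andbT; apply/allP => x.
  by rewrite mem_sort => /BV[_ /andP[]].
- by rewrite /= size_sort ltnW.
by move=> x; rewrite inE mem_sort => /predU1P[->|/BV[Vx /andP[_ x1]]] //; rewrite ltr01.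
Qed.

Lemma valid_Vn_of_valid (V : set RR) n A : V `<=` V01 -> V 0 -> V 1 ->
  infinite_set (V `&` [set x | 0 < x < 1]) -> (2 <= n)%N ->
  BS_valid A -> valid V A -> valid (Vn n) A.
Proof.
move=> V_01 V0 V1 Vinf n2 [_ [xs [ys [psi [qpsi ->]]]]] validV J.
apply: (value_eq1 (Vn_01 n)) => /(alls_exs_lt1_witness (Vn_01 n))[e pe psi1].
have [tgt [tgt_sorted tgt_head size_tgt tgt_V]] := finite_chain _ n V0 Vinf.
have tgt_lt1 : {in tgt, forall x, x < 1} by move=> x /tgt_V[].
have size_src : (size (vn_seq n) <= size tgt)%N.
  by rewrite size_vn_seq (leq_trans (leq_pred n)).
have [h [hW h_rng h_src]] := rank_embedding (mem0_vn_seq _ n2) (@vn_seq_01 n)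
  tgt_sorted tgt_head tgt_lt1 size_src.
have [M M1 tgt_M] := lt1_upper_bound _ tgt_lt1.
have hV x : Vn n x -> V (h x) by move=> _; case: (h_rng x) => [/tgt_V[]|->].
pose W := [set x | x \in vn_seq n \/ x = 1].
have W_atoms p us : (p, size us) \in symbols psi -> W (ipred J p (map id us)).
  by rewrite map_id => _; apply/VnE/ipred_V.
have hM w : W w -> w < 1 -> h w <= M.
  by case=> [/h_src/tgt_M //|->]; rewrite ltxx.
have := pullback_refutes (dom_pt J) id (icst J) hV hW (or_introl (mem0_vn_seq _ n2))
  (or_intror erefl) W_atoms (fun _ _ => erefl) V_01 qpsi (allss _) (allss _) hM pe
  (fun _ _ => erefl) psi1.
by rewrite validV leNgt M1.
Qed.

Lemma valid_of_valid_Vn (V : set RR) A : V `<=` V01 -> BS_valid A ->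
  (forall n, (2 <= n)%N -> valid (Vn n) A) -> valid V A.
Proof.
move=> V_01 [_ [xs [ys [psi [qpsi ->]]]]] validVn I.
apply: (value_eq1 V_01) => /(alls_exs_lt1_witness V_01)[e pe psi1].
have [D [d0 [f [c [eJ [pJ fe fc]]]]]] := finite_restriction psi pe.
have [S S_atoms] := atom_values_finite I f (symbols psi).
pose src := 0 :: [seq w <- S | 0 <= w < 1].
have src_01 : {in src, forall v, 0 <= v < 1}.
  by move=> v; rewrite inE mem_filter => /predU1P[->|/andP[]//]; rewrite lexx ltr01.
pose n := (size src).+1; have n2 : (2 <= n)%N by [].
have tgt_lt1 : {in vn_seq n, forall v, v < 1} by move=> v /vn_seq_01/andP[].
have size_tgt : (size src <= size (vn_seq n))%N by rewrite size_vn_seq.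
have [h [hW h_rng h_src]] := rank_embedding (mem_head 0 _) src_01 (vn_seq_sorted n)
  (vn_seq_head _ n2) tgt_lt1 size_tgt.
have [M M1 tgt_M] := lt1_upper_bound _ tgt_lt1.
have hV x : V x -> Vn n (h x) by move=> _; apply/VnE; exact: h_rng.
pose W := [set x | x \in src \/ x = 1].
have W_atoms p us : (p, size us) \in symbols psi -> W (ipred I p (map f us)).
  move=> /S_atoms wS; have /andP[w0] := V_01 _ (ipred_V I p (map f us)).
  rewrite le_eqVlt => /predU1P[->|w1]; [by right | left].
  by rewrite inE mem_filter w0 w1 wS orbT.
have hM w : W w -> w < 1 -> h w <= M.
  by case=> [/h_src/tgt_M //|->]; rewrite ltxx.
have := pullback_refutes d0 f c hV hW (or_introl (mem_head 0 _)) (or_intror erefl)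
  W_atoms fc (Vn_01 n) qpsi (allss _) (allss _) hM pJ fe psi1.
by rewrite (validVn n n2) leNgt M1.
Qed.

Definition pos_indicator (x : RR) : RR := if 0 < x then 1 else 0.

Lemma goedel_hom_pos_indicator : goedel_hom [set x | 0 <= x] pos_indicator.
Proof.
rewrite /pos_indicator; split=> [|||a b a0 b0 ab]; rewrite ?ltxx ?ltr01 //.
  move=> a b a0 b0 ab; case: ifPn => [a_gt0|_]; last by case: ifP; rewrite ?ler01.
  by rewrite (lt_le_trans a_gt0 ab).
case: ifP => _; [by right | left].
by rewrite (le_lt_trans a0 ab) ltr01.
Qed.

Lemma sat1_Vn_of_sat1 (V : set RR) n A : V `<=` V01 -> (2 <= n)%N ->
  BS_sat A -> sat1 V A -> sat1 (Vn n) A.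
Proof.
move=> V_01 n2 [_ [xs [ys [psi [qpsi ->]]]]] [I /(exs_alls_eq1_witness V_01)[e pe psi0]].
have Vn0 : Vn n 0 by apply/VnE; left; exact: mem0_vn_seq.
have hV x : V x -> Vn n (pos_indicator x).
  by move=> _; rewrite /pos_indicator; case: ifP => _ //; left.
pose J := pullback (dom_pt I) id (icst I) hV.
exists J; apply: (value_exs_alls_eq1 (I := J) (Vn_01 n) pe) => e' ee'.
have W_atoms p us : (p, size us) \in symbols psi -> 0 <= ipred I p (map id us).
  by move=> _; have /andP[] := V_01 _ (ipred_V I p (map id us)).
have [-> _] := eval_pullback (dom_pt I) id (icst I) hV goedel_hom_pos_indicator
  (lexx 0) ler01 W_atoms (fun _ _ => erefl) psi e' qpsi (allss _) (allss _).
by rewrite /pos_indicator psi0.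
Qed.

Definition widen {V V' : set RR} (VV' : V `<=` V') (I : interp V) : interp V' :=
  Interp V' (dom I) (dom_pt I) (icst I) (ipred I) (fun p us => VV' _ (ipred_V I p us)).

Lemma eval_widen (V V' : set RR) (VV' : V `<=` V') (I : interp V) e A :
  eval (widen VV' I) e A = eval I e A.
Proof.
elim: A e => //= [a IHa b IHb|a IHa b IHb|a IHa b IHb|x a IHa|x a IHa] e.
1-3: by rewrite IHa IHb.
- by congr inf; apply: eq_imagel => u _; exact: IHa.
- by congr sup; apply: eq_imagel => u _; exact: IHa.
Qed.

Lemma sat1_widen (V V' : set RR) A : V `<=` V' -> sat1 V A -> sat1 V' A.
Proof. by move=> VV' [I HI]; exists (widen VV' I); rewrite /value eval_widen. Qed.

Lemma Vn2_sub (V : set RR) : V 0 -> V 1 -> Vn 2 `<=` V.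
Proof.
move=> V0 V1 x [->//|[k [/andP[k1 k2] ->]]].
have -> : k = 1%N by apply/eqP; rewrite eqn_leq k1 k2.
by rewrite invr1 subrr.
Qed.

Theorem corollary5p4 :
  (forall V : set RR, goedel_set V -> infinite_set V ->
     (forall A, BS_valid A -> (valid V A <-> forall n : nat, (2 <= n)%N -> valid (Vn n) A)) /\
     (forall A, BS_sat A -> (sat1 V A <-> forall n : nat, (2 <= n)%N -> sat1 (Vn n) A))) /\
  (forall A, BS_valid A -> (valid V01 A <-> forall n : nat, (2 <= n)%N -> valid (Vn n) A)).
Proof.
split=> [V [_ [V_01 [V0 V1]]] Vinf|A hA].
  have Vint := infinite_interior _ V_01 Vinf.
  split=> A hA; split.
  - by move=> validV n n2; exact: (valid_Vn_of_valid _ _ _ V_01 V0 V1 Vint n2 hA).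
  - exact: valid_of_valid_Vn V_01 hA.
  - by move=> satV n n2; exact: sat1_Vn_of_sat1 V_01 n2 hA satV.
  - by move=> /(_ 2%N isT); apply: sat1_widen; exact: Vn2_sub.
have V01_0 : V01 0 by rewrite /V01 /= lexx ler01.
have V01_1 : V01 1 by rewrite /V01 /= lexx ler01.
split; last exact: valid_of_valid_Vn (fun _ => id) hA.
move=> validV n n2; apply: (valid_Vn_of_valid _ _ _ (fun _ => id) V01_0 V01_1) => //.
exact: infinite_unit_interior.
Qed.
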